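(* Fix $\alpha\in(0,1)$. Every $\alpha$-power piecewise linear function $g:\mathbb{R}\to\mathbb{R}$ is exactly representable by a width-one leaky-ReLU network: there exist $L\in\mathbb{N}$ and parameters $w_i,b_i\in\mathbb{R}$ such that the corresponding $f_L\in\mathcal{N}_1(L)$ satisfies $g(x)=f_L(x)$ for all $x\in\mathbb{R}$.
   Context: Leaky-ReLU: $\sigma_\alpha(x)=\max(\alpha x,x)$. $\mathcal{N}_1(L)$ is the set of functions $f_L:\mathbb{R}\to\mathbb{R}$ with $f_0(x)=w_0x+b_0$, $f_k(x)=w_k\sigma_\alpha(f_{k-1}(x))+b_k$ ($k=1,\dots,L$), $w_k,b_k\in\mathbb{R}$. A piecewise linear (PL) function is a continuous function $g:\mathbb{R}\to\mathbb{R}$ which is affine on each of finitely many intervals partitioning $\mathbb{R}$ (separated by finitely many breakpoints). A PL function $g$ is called $\alpha$-power PL if there is a constant $c\in\mathbb{R}$ such that the slope of every linear piece of $g$ lies in $\{c\alpha^k: k\in\mathbb{Z}\}$. *)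

From Stdlib Require Import Reals Lra List.
Open Scope R_scope.

Definition leaky (alpha x : R) : R := Rmax (alpha * x) x.

Fixpoint net (alpha : R) (w b : nat -> R) (k : nat) (x : R) : R :=
  match k with
  | O => w O * x + b O
  | S k' => w k * leaky alpha (net alpha w b k' x) + b k
  end.

Fixpoint strictly_sorted (l : list R) : Prop :=
  match l with
  | nil => True
  | x :: l' => match l' with
               | nil => True
               | y :: _ => x < y /\ strictly_sorted l'
               end
  end.

(* g is piecewise linear with breakpoints t_0 < ... < t_{n-1} and pieces
   indexed 0..n:  piece 0 on (-oo, t_0], piece i on [t_{i-1}, t_i],
   piece n on [t_{n-1}, +oo); piece i has slope (s i) and intercept (c i).
   (For n = 0, g is affine on all of R.)  Since pieces are on closed
   intervals, g is automatically continuous. *)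
Definition PL_with (g : R -> R) (t : list R) (s c : nat -> R) : Prop :=
  strictly_sorted t /\
  forall (i : nat) (x : R), (i <= length t)%nat ->
    (i = O \/ nth (i - 1) t 0 <= x) ->
    (i = length t \/ x <= nth i t 0) ->
    g x = s i * x + c i.

Definition piecewise_linear (g : R -> R) : Prop :=
  exists t s c, PL_with g t s c.

Definition alpha_power_PL (alpha : R) (g : R -> R) : Prop :=
  exists t s c, PL_with g t s c /\
    exists C : R, forall i : nat, (i <= length t)%nat ->
      exists k : Z, s i = C * powerRZ alpha k.

From Stdlib Require Import Reals.
From Stdlib Require Import Lra Lia List.
Open Scope R_scope.

(* Let [bend r] be the identity on [u >= 0] and multiplication by [r] on
   [u <= 0].  Both [bend alpha] (which is [leaky alpha]) and [bend (/ alpha)]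
   are a leaky-ReLU composed with affine maps, and [bend r] after [bend r']
   is [bend (r r')]; so functions computed by width-one networks remain
   computable after precomposition with [bend (alpha ^ k)] for any [k : Z].
   Peel off the leftmost breakpoint [t1] of [g]: if [h] extends the second
   piece of [g] to the left of [t1], then [g x = h (t1 + bend r (x - t1))],
   where [r], the ratio of the first two slopes, is a power of [alpha].
   Induction on the number of breakpoints ends at an affine function, a
   network of depth zero. *)

Definition bend (r u : R) : R := u + (r - 1) * Rmin u 0.

Lemma bend_ge0 r u : 0 <= u -> bend r u = u.
Proof. intro Hu. unfold bend. rewrite Rmin_right by lra. ring. Qed.

Lemma bend_le0 r u : u <= 0 -> bend r u = r * u.
Proof. intro Hu. unfold bend. rewrite Rmin_left by lra. ring. Qed.

Lemma bend1 u : bend 1 u = u.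
Proof. unfold bend. ring. Qed.

Lemma bend_mul r r' u : 0 < r' -> bend r (bend r' u) = bend (r * r') u.
Proof.
  intro Hr'. destruct (Rle_dec 0 u) as [Hu|Hu].
  - rewrite (bend_ge0 r' u), !bend_ge0 by lra. reflexivity.
  - assert (u < 0) by lra.
    rewrite (bend_le0 r' u), !bend_le0 by nra. ring.
Qed.

Lemma leaky_bend alpha u : 0 <= alpha <= 1 -> leaky alpha u = bend alpha u.
Proof.
  intro Ha. unfold leaky. destruct (Rle_dec 0 u) as [Hu|Hu].
  - rewrite bend_ge0, Rmax_right by nra. reflexivity.
  - rewrite bend_le0, Rmax_left by nra. reflexivity.
Qed.

Lemma bend_inv_leaky alpha u : 0 < alpha <= 1 ->
  bend (/ alpha) u = - / alpha * leaky alpha (- u).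
Proof.
  intro Ha. unfold leaky. destruct (Rle_dec 0 u) as [Hu|Hu].
  - rewrite bend_ge0, Rmax_left by nra. field. lra.
  - rewrite bend_le0, Rmax_right by nra. field. lra.
Qed.

Section NetFunctions.
Variable alpha : R.

Definition net_fun (f : R -> R) : Prop :=
  exists L w b, forall x, f x = net alpha w b L x.

Definition precomp_net (psi : R -> R) : Prop :=
  forall f, net_fun f -> net_fun (fun x => f (psi x)).

Lemma net_fun_ext f g : net_fun f -> (forall x, f x = g x) -> net_fun g.
Proof. intros [L [w [b Hf]]] Efg. exists L, w, b. intro x. rewrite <- Efg. apply Hf. Qed.

Lemma net_fun_affine p q : net_fun (fun x => p * x + q).
Proof. exists O, (fun _ => p), (fun _ => q). reflexivity. Qed.

Lemma precomp_net_ext psi phi :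
  precomp_net psi -> (forall x, psi x = phi x) -> precomp_net phi.
Proof.
  intros Hpsi E f Hf. apply (net_fun_ext _ _ (Hpsi f Hf)). intro x. now rewrite E.
Qed.

Lemma precomp_net_comp psi phi :
  precomp_net psi -> precomp_net phi -> precomp_net (fun x => psi (phi x)).
Proof. intros Hpsi Hphi f Hf. exact (Hphi _ (Hpsi f Hf)). Qed.

(* Absorb the affine map into the input layer. *)
Lemma precomp_net_affine p q : precomp_net (fun x => p * x + q).
Proof.
  intros f [L [w [b Hf]]].
  exists L, (fun k => match k with O => w O * p | _ => w k end),
            (fun k => match k with O => w O * q + b O | _ => b k end).
  intro x. rewrite Hf. clear Hf.
  induction L as [|k IH]; simpl net.
  - ring.
  - now rewrite IH.
Qed.

(* Prepend the input layer [x |-> 1 * x + 0], shifting all other layers. *)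
Lemma precomp_net_leaky : precomp_net (leaky alpha).
Proof.
  intros f [L [w [b Hf]]].
  set (w' k := match k with O => 1 | S k => w k end).
  set (b' k := match k with O => 0 | S k => b k end).
  assert (Hshift : forall k x, net alpha w b k (leaky alpha x) = net alpha w' b' (S k) x).
  { induction k as [|k IH]; intro x.
    - simpl. unfold w', b'. f_equal. f_equal. f_equal. ring.
    - change (net alpha w' b' (S (S k)) x)
        with (w (S k) * leaky alpha (net alpha w' b' (S k) x) + b (S k)).
      now rewrite <- IH. }
  exists (S L), w', b'. intro x. now rewrite Hf, Hshift.
Qed.

Lemma precomp_net_bend_pow r n :
  0 < r -> precomp_net (bend r) -> precomp_net (bend (r ^ n)).
Proof.
  intros Hr Hbend. induction n as [|n IH].
  - apply (precomp_net_ext (fun x => x)); [now intros f|]. intro u. now rewrite bend1.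
  - apply (precomp_net_ext _ _ (precomp_net_comp _ _ Hbend IH)). intro u.
    rewrite bend_mul; [reflexivity|]. now apply pow_lt.
Qed.

Hypothesis Ha : 0 < alpha <= 1.

Lemma precomp_net_bend_powerRZ k : precomp_net (bend (powerRZ alpha k)).
Proof.
  assert (Hbend : precomp_net (bend alpha)).
  { apply (precomp_net_ext _ _ precomp_net_leaky). intro u. apply leaky_bend. lra. }
  assert (Hbend_inv : precomp_net (bend (/ alpha))).
  { apply (precomp_net_ext (fun x => - / alpha * leaky alpha (-1 * x + 0) + 0)).
    - apply (precomp_net_comp (fun y => - / alpha * y + 0)); [apply precomp_net_affine|].
      apply (precomp_net_comp (leaky alpha)); [apply precomp_net_leaky|apply precomp_net_affine].
    - intro u. rewrite bend_inv_leaky by lra.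
      replace (-1 * u + 0) with (- u) by ring. ring. }
  destruct k as [|p|p]; simpl.
  - apply (precomp_net_ext (fun x => x)); [now intros f|]. intro u. now rewrite bend1.
  - apply precomp_net_bend_pow; [lra|exact Hbend].
  - rewrite <- pow_inv. apply precomp_net_bend_pow; [now apply Rinv_0_lt_compat|exact Hbend_inv].
Qed.

End NetFunctions.

Lemma strictly_sorted_tail t1 rest : strictly_sorted (t1 :: rest) -> strictly_sorted rest.
Proof. simpl. destruct rest; tauto. Qed.

Lemma strictly_sorted_head_lt t1 rest : strictly_sorted (t1 :: rest) ->
  forall j, (j < length rest)%nat -> t1 < nth j rest 0.
Proof.
  revert t1. induction rest as [|a rest IH]; intros t1 Hsorted j Hj; simpl in Hj.
  - lia.
  - destruct Hsorted as [Ht1a Hsorted]. destruct j as [|j]; [exact Ht1a|].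
    assert (a < nth j rest 0) by (apply IH; [exact Hsorted|lia]). simpl. lra.
Qed.

Definition drop_first_piece (g : R -> R) (t1 : R) (s c : nat -> R) (y : R) : R :=
  if Rle_dec y t1 then s 1%nat * y + c 1%nat else g y.

Section DropFirstPiece.
Variables (g : R -> R) (t1 : R) (rest : list R) (s c : nat -> R).
Hypothesis Hg : PL_with g (t1 :: rest) s c.

Lemma PL_with_first_piece x : x <= t1 -> g x = s 0%nat * x + c 0%nat.
Proof. intro Hx. apply Hg; simpl; auto with arith. Qed.

Lemma PL_with_second_piece x : t1 <= x -> (rest = nil \/ x <= nth 0 rest 0) ->
  g x = s 1%nat * x + c 1%nat.
Proof.
  intros Hx Hrest. apply Hg; simpl.
  - lia.
  - now right.
  - destruct Hrest as [->|Hrest]; [now left|now right].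
Qed.

Lemma PL_with_second_piece_at_t1 : g t1 = s 1%nat * t1 + c 1%nat.
Proof.
  apply PL_with_second_piece; [lra|].
  destruct rest as [|a r]; [now left|right].
  apply Rlt_le, (strictly_sorted_head_lt t1 (a :: r)); [apply Hg|simpl; lia].
Qed.

Lemma PL_with_drop_first_piece :
  PL_with (drop_first_piece g t1 s c) rest (fun i => s (S i)) (fun i => c (S i)).
Proof.
  destruct Hg as [Hsorted Hpieces]. split; [exact (strictly_sorted_tail _ _ Hsorted)|].
  intros i x Hi Hleft Hright. unfold drop_first_piece.
  destruct (Rle_dec x t1) as [Hx|Hx].
  - destruct i as [|i]; [reflexivity|].
    destruct Hleft as [Hleft|Hleft]; [lia|].
    assert (t1 < nth (S i - 1) rest 0) by (apply strictly_sorted_head_lt; [exact Hsorted|lia]).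
    lra.
  - apply Hpieces; simpl.
    + lia.
    + right. destruct i as [|i]; simpl; [lra|].
      destruct Hleft as [Hleft|Hleft]; [lia|]. simpl in Hleft. now rewrite Nat.sub_0_r in Hleft.
    + destruct Hright as [Hright|Hright]; [left; lia|now right].
Qed.

(* Left of [t1] the bend rescales [x - t1] by the slope ratio [r], and
   continuity at [t1] matches the intercepts. *)
Lemma drop_first_piece_bend r : 0 < r -> s 0%nat = r * s 1%nat ->
  forall x, g x = drop_first_piece g t1 s c (t1 + bend r (x - t1)).
Proof.
  intros Hr Hs0 x. unfold drop_first_piece.
  assert (Hcont : s 0%nat * t1 + c 0%nat = s 1%nat * t1 + c 1%nat).
  { rewrite <- PL_with_first_piece by lra. exact PL_with_second_piece_at_t1. }
  destruct (Rle_dec t1 x) as [Hx|Hx].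
  - rewrite bend_ge0 by lra. replace (t1 + (x - t1)) with x by ring.
    destruct (Rle_dec x t1) as [Hxt1|]; [|reflexivity].
    replace x with t1 by lra. exact PL_with_second_piece_at_t1.
  - rewrite bend_le0 by lra.
    destruct (Rle_dec (t1 + r * (x - t1)) t1) as [_|Hnot]; [|exfalso; nra].
    rewrite PL_with_first_piece by lra. rewrite Hs0 in Hcont |- *. nra.
Qed.

End DropFirstPiece.

Lemma PL_with_alpha_power_net_fun alpha (C : R) (t : list R) :
  0 < alpha <= 1 -> forall g s c, PL_with g t s c ->
  (forall i, (i <= length t)%nat -> exists k, s i = C * powerRZ alpha k) ->
  net_fun alpha g.
Proof.
  intro Ha. induction t as [|t1 rest IH]; intros g s c Hg Hs.
  - apply (net_fun_ext _ _ _ (net_fun_affine alpha (s O) (c O))). intro x.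
    symmetry. apply Hg; simpl; auto.
  - destruct (Hs 0%nat ltac:(simpl; lia)) as [k0 Hk0].
    destruct (Hs 1%nat ltac:(simpl; lia)) as [k1 Hk1].
    set (r := powerRZ alpha (k0 - k1)).
    assert (Hr : 0 < r) by (apply powerRZ_lt; lra).
    assert (Hs0 : s 0%nat = r * s 1%nat).
    { rewrite Hk0, Hk1. unfold r. replace k0 with ((k0 - k1) + k1)%Z at 1 by lia.
      rewrite powerRZ_add by lra. ring. }
    assert (Hh : net_fun alpha (drop_first_piece g t1 s c)).
    { apply (IH _ _ _ (PL_with_drop_first_piece g t1 rest s c Hg)).
      intros i Hi. apply Hs. simpl. lia. }
    assert (Hpre : precomp_net alpha (fun x => 1 * bend r (1 * x + - t1) + t1)).
    { apply (precomp_net_comp alpha (fun y => 1 * y + t1)); [apply precomp_net_affine|].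
      apply (precomp_net_comp alpha (bend r)); [now apply precomp_net_bend_powerRZ|].
      apply precomp_net_affine. }
    apply (net_fun_ext _ _ _ (Hpre _ Hh)). intro x.
    rewrite (drop_first_piece_bend g t1 rest s c Hg r Hr Hs0 x).
    f_equal. replace (1 * x + - t1) with (x - t1) by ring. ring.
Qed.

Theorem mainTheorem4 (alpha : R) (Ha : 0 < alpha < 1) (g : R -> R) :
  alpha_power_PL alpha g ->
  exists (L : nat) (w b : nat -> R), forall x : R, g x = net alpha w b L x.
Proof.
  intros [t [s [c [Hg [C HC]]]]].
  exact (PL_with_alpha_power_net_fun alpha C t ltac:(lra) g s c Hg HC).
Qed.
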